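(* Let $p$ be a prime, $k\ge0$ an integer and $n\ge1$ an integer, with $n>1$ if $p=2$. Then (1) $P(p,p^k(p^n-1))=p^k(p^n-1)$; (2) $P(p,p^k(p^n+1))=p^k(p^{2n}-1)$.
   Context: For positive integers $m,N$, let $\mathbf{Z}_m$ be the integers modulo $m$ and $T:\mathbf{Z}_m^N\to\mathbf{Z}_m^N$, $T(a_0,\dots,a_{N-1})=(a_0+a_1,a_1+a_2,\dots,a_{N-1}+a_0)$. For $\mathbf{a}\in\mathbf{Z}_m^N$ the cycle length of $(T^j\mathbf{a})_{j\ge0}$ is the smallest positive integer $P$ such that there is $M$ with $T^{j+P}\mathbf{a}=T^j\mathbf{a}$ for all $j\ge M$. $P(m,N)$ denotes the maximum of these cycle lengths over all $\mathbf{a}\in\mathbf{Z}_m^N$. *)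

From mathcomp Require Import all_boot all_order all_algebra.
Set Implicit Arguments. Unset Strict Implicit. Unset Printing Implicit Defensive.
Import GRing.Theory.
Local Open Scope ring_scope.

(* Vectors in (Z_m)^N, indexed cyclically by 'I_N.  'Z_m is Z/mZ for m >= 2
   (the only case used: m = p prime). *)
Definition vecZ (m N : nat) := {ffun 'I_N -> 'Z_m}.

Definition Tmap (m N : nat) (a : vecZ m N) : vecZ m N :=
  [ffun i => a i + a (ordS i)].

Definition is_eventual_period (m N : nat) (a : vecZ m N) (P : nat) : Prop :=
  exists M : nat, forall j : nat, (M <= j)%N ->
    iter (j + P) (@Tmap m N) a = iter j (@Tmap m N) a.

Definition cycle_length (m N : nat) (a : vecZ m N) (L : nat) : Prop :=
  (0 < L)%N /\ is_eventual_period a L /\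
  forall Q : nat, (0 < Q < L)%N -> ~ is_eventual_period a Q.

Definition Pmax_is (m N L : nat) : Prop :=
  (exists a : vecZ m N, cycle_length a L) /\
  forall (a : vecZ m N) (Q : nat), cycle_length a Q -> (Q <= L)%N.

From mathcomp Require Import all_boot all_order all_algebra.
From mathcomp Require Import zify ring separable cyclotomic.
Set Implicit Arguments. Unset Strict Implicit. Unset Printing Implicit Defensive.
Import GRing.Theory.

(* Identify Z_p^N with F_p[X]/(X^N - 1), the vector a corresponding to f
   when a_i is the sum of the coefficients f_j with j = -i mod N.  Then T is
   multiplication by y = X + 1, so every orbit has a period dividing the order
   of y modulo the part of X^N - 1 prime to y, and the orbit of 1 attains it.
   For N = p^k m with p not dividing m, that part is h^(p^k) where
   h y = X^m - 1, and since X^m - 1 is separable the order of y modulo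
   h^(p^k) is p^k times its order d modulo h.  With q = p^n, the Frobenius
   identity y^q = X^q + 1 determines d: for m = q - 1, h = (y^(q-1) - 1)/X
   and d = q - 1; for m = q + 1, h = X y^(q-1) - 1 and d = q^2 - 1. *)

Lemma dvdn_eq_of_lt_double d n : 0 < n -> d %| n -> n < d.*2 -> d = n.
Proof.
move=> n_gt0 /dvdnP [t n_eq]; subst n.
rewrite -mul2n ltn_mul2r; case: t n_gt0 => [|[|t]] //=; first by rewrite mul1n.
by rewrite andbF.
Qed.

Lemma ppow_gt2 p n : prime p -> 0 < n -> (p = 2 -> 1 < n) -> 2 < p ^ n.
Proof.
move=> p_pr n_gt0 p2_n_gt1; have [p2 | p_odd] := even_prime p_pr.
  by rewrite p2 -[X in X < _](expn1 2) ltn_exp2l // p2_n_gt1.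
apply: leq_trans (odd_prime_gt2 p_odd p_pr) _.
by rewrite -{1}(expn1 p); exact: leq_pexp2l (prime_gt0 p_pr) n_gt0.
Qed.

Lemma ndvdn_pred_succ p r : 1 < p -> p %| r.+1 -> ~~ (p %| r) /\ ~~ (p %| r.+2).
Proof.
move=> p_gt1 p_r1; have p_n1 : ~~ (p %| 1) by rewrite dvdn1 neq_ltn p_gt1 orbT.
split; apply: contra p_n1 => p_dvd; first by rewrite -(dvdn_addr 1 p_dvd) addn1.
by rewrite -(dvdn_addr 1 p_r1) addn1.
Qed.

Lemma dvdn_add_subn_mod N i j : i < N -> j < N -> (N %| i + (N - j) %% N) = (i == j).
Proof.
move=> iN jN; apply/idP/eqP => [|->]; last first.
  have [-> | j_gt0] := posnP j; first by rewrite subn0 modnn.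
  by rewrite modn_small ?subnKC ?dvdnn //; lia.
have [j0 | j_gt0] := posnP j.
  by rewrite j0 subn0 modnn addn0 /dvdn modn_small // => /eqP.
rewrite (modn_small (_ : N - j < N)); last by lia.
have [ji | ij] := leqP j i.
  have -> : i + (N - j) = N + (i - j) by lia.
  by rewrite /dvdn modnDl modn_small => [/eqP|]; lia.
by rewrite /dvdn modn_small => [/eqP|]; lia.
Qed.

Lemma subn_subn_modK N i : i < N -> (N - (N - i) %% N) %% N = i.
Proof.
move=> iN; have [-> | i_gt0] := posnP i; first by rewrite subn0 modnn subn0 modnn.
by rewrite (modn_small (_ : N - i < N)) ?modn_small; lia.
Qed.

Lemma dvdn_add_eq_subn_mod N i j : i < N -> j < N -> (N %| j + i) = (j == (N - i) %% N).
Proof.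
move=> iN jN; rewrite -{1}(subn_subn_modK iN) dvdn_add_subn_mod ?ltn_pmod //.
exact: leq_ltn_trans (leq0n _) iN.
Qed.

Local Open Scope ring_scope.

Local Notation y := ('X + 1).

Section Congruences.
Variable R : fieldType.
Implicit Types h c u v : {poly R}.

Lemma dvdp_subX h u v n : h %| u - v -> h %| u ^+ n - v ^+ n.
Proof. by move=> huv; rewrite subrXX dvdp_mulr. Qed.

Lemma dvdp_expB1 h c n : h %| c - 1 -> h %| c ^+ n - 1.
Proof. by move/(dvdp_subX n); rewrite expr1n. Qed.

Lemma dvdp_mulB1_cancel h u v :
  coprimep h u -> h %| u - 1 -> h %| u * v - 1 -> h %| v - 1.
Proof.
move=> hu hu1; have -> : u * v - 1 = u * (v - 1) + (u - 1).
  by rewrite mulrBr mulr1 addrA subrK.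
by rewrite dvdp_addl // Gauss_dvdpr.
Qed.

Lemma dvdp_expB1_gcdn h c (a b : nat) : coprimep h c ->
  h %| c ^+ a - 1 -> h %| c ^+ b - 1 -> h %| c ^+ gcdn a b - 1.
Proof.
move=> hc ha hb; have [-> | a_gt0] := posnP a; first by rewrite gcd0n.
have [x _ /dvdnP [t Et]] := Bezoutl b a_gt0.
have hxb : h %| c ^+ (x * b) - 1 by rewrite mulnC exprM dvdp_expB1.
apply: (dvdp_mulB1_cancel (coprimep_expr _ hc) hxb).
by rewrite -exprD addnC Et mulnC exprM dvdp_expB1.
Qed.
End Congruences.

Lemma size_XnsubC1 {R : nzRingType} n : (0 < n)%N -> size ('X^n - 1 : {poly R}) = n.+1.
Proof. by move=> n_gt0; rewrite -polyC1 size_XnsubC. Qed.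

Lemma size_yexp {R : nzRingType} n : size (y ^+ n : {poly R}) = n.+1.
Proof.
have -> : y = 'X - (-1)%:P :> {poly R} by rewrite polyCN opprK polyC1.
exact: size_exp_XsubC.
Qed.

Lemma size_yexpB1 {R : nzRingType} n : (0 < n)%N -> size (y ^+ n - 1 : {poly R}) = n.+1.
Proof. by move=> n_gt0; rewrite size_polyDl size_yexp // size_polyN size_poly1. Qed.

Lemma mulX_sum_yexp {R : nzRingType} n : 'X * \sum_(i < n) y ^+ i = y ^+ n - 1 :> {poly R}.
Proof. by rewrite subrX1 addrK. Qed.

Lemma dvdp_sum_yexp {R : fieldType} n : \sum_(i < n) y ^+ i %| (y ^+ n - 1 : {poly R}).
Proof. by rewrite -mulX_sum_yexp dvdp_mull. Qed.

Lemma separable_yexpB1 {R : fieldType} Q :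
  Q%:R != 0 :> R -> separable_poly (y ^+ Q - 1 : {poly R}).
Proof.
case: Q => [/eqP // | Q] Q_neq0; rewrite unlock derivB derivC subr0 deriv_exp.
rewrite derivD derivX -polyC1 derivC addr0 mul1r -scaler_nat coprimepZr //.
rewrite coprimep_expr // coprimep_sym exprSr -scaleN1r polyC1 coprimep_addl_mul.
by rewrite coprimepZr ?coprimep1 ?oppr_eq0 ?oner_eq0.
Qed.

Section CharP.
Variables (R : fieldType) (p : nat).
Hypothesis charR : p \in [pchar R].

Lemma pchar_poly_pnat s : [pchar {poly R}].-nat (p ^ s)%N.
Proof. by rewrite pnatX (pnatE _ (pcharf_prime charR)) pchar_poly charR. Qed.

Lemma exprB1_pchar s (u : {poly R}) : (u - 1) ^+ (p ^ s) = u ^+ (p ^ s) - 1.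
Proof. by rewrite exprDn_pchar ?exprNn_pchar ?expr1n ?pchar_poly_pnat. Qed.

Lemma exprXD1_pchar s : y ^+ (p ^ s) = 'X^(p ^ s) + 1 :> {poly R}.
Proof. by rewrite exprDn_pchar ?expr1n ?pchar_poly_pnat. Qed.

(* If Q = Q' p^s with s < k, Frobenius turns the hypothesis into
   h^p | y^Q' - 1, which is impossible as y^Q' - 1 is separable. *)
Lemma pexp_dvdn_of_dvdp_expB1 (h : {poly R}) k Q : size h != 1%N -> (0 < Q)%N ->
  h ^+ (p ^ k) %| y ^+ Q - 1 -> (p ^ k %| Q)%N.
Proof.
move=> h_n1 Q_gt0 hQ; have p_pr := pcharf_prime charR.
have [Q' p'Q' Q_eq] := pfactor_coprime p_pr Q_gt0; set s := logn p Q in Q_eq.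
rewrite Q_eq; have [k_le_s | s_lt_k] := leqP k s.
  by rewrite dvdn_mull // dvdn_exp2l.
have ps_gt0 : (0 < p ^ s)%N by rewrite expn_gt0 prime_gt0.
have hpQ' : h ^+ p %| y ^+ Q' - 1.
  rewrite -(dvdp_pexp2r _ _ ps_gt0) exprB1_pchar -!exprM -expnS -Q_eq.
  by apply: dvdp_trans hQ; rewrite dvdp_exp2l // leq_pexp2l ?prime_gt0.
have Q'_neq0 : Q'%:R != 0 :> R by rewrite -(dvdn_pcharf charR) -prime_coprime.
by rewrite separable_nosquare ?separable_yexpB1 ?prime_gt1 in hpQ'.
Qed.
End CharP.

Section Cofactor.
Variables (R : fieldType) (m : nat) (h : {poly R}).
Hypotheses (hyE : h * y = 'X^m - 1) (m_gt1 : (1 < m)%N) (m_neq0 : m%:R != 0 :> R).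

Lemma size_cofactor : size h = m.
Proof.
have m_gt0 := ltnW m_gt1.
have h_neq0 : h != 0.
  by apply: contra_eq_neq hyE => ->; rewrite mul0r eq_sym -size_poly_eq0 size_XnsubC1.
have := congr1 (fun u : {poly R} => size u) hyE.
by rewrite -polyC1 size_Mmonic ?monicXaddC // size_XaddC size_XnsubC // addn2 => -[].
Qed.

Lemma cofactor_coprimeX : coprimep h 'X.
Proof.
rewrite -['X]subr0 coprimep_XsubC; apply/negP => /(root_dvdp (dvdp_mulr y (dvdpp h))).
by rewrite hyE rootE !hornerE expr0n gtn_eqF ?(ltnW m_gt1) // sub0r oppr_eq0 oner_eq0.
Qed.

Lemma cofactor_coprimey : coprimep h y.
Proof. by apply: separable_coprime (separable_Xn_sub_1 m_neq0) _; rewrite hyE. Qed.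

Lemma cofactor_Xorder j : (2 < m)%N -> (0 < j)%N -> h %| 'X^j - 1 -> (m %| j)%N.
Proof.
move=> m_gt2 j_gt0 hj; have hm : h %| 'X^m - 1 by rewrite -hyE dvdp_mulr.
have hg := dvdp_expB1_gcdn cofactor_coprimeX hj hm.
have g_gt0 : (0 < gcdn j m)%N by rewrite gcdn_gt0 j_gt0.
have := dvdp_leq _ hg; rewrite -size_poly_eq0 size_XnsubC1 // size_cofactor => /(_ isT) m_le.
rewrite -(dvdn_eq_of_lt_double _ (dvdn_gcdr j m)) ?dvdn_gcdl //; lia.
Qed.

Lemma cofactor_yorder_geq j : (0 < j)%N -> h %| y ^+ j - 1 -> (m <= j)%N.
Proof.
move=> j_gt0 hj; have hXj : h * 'X %| y ^+ j - 1.
  by rewrite Gauss_dvdp ?cofactor_coprimeX // hj -mulX_sum_yexp dvdp_mulr.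
have h_neq0 : h != 0 by rewrite -size_poly_eq0 size_cofactor -lt0n ltnW.
have := dvdp_leq _ hXj; rewrite -size_poly_eq0 size_yexpB1 // size_mulX // size_cofactor.
by apply.
Qed.
End Cofactor.

Section FrobeniusY.
Variables (R : fieldType) (r : nat).
Hypothesis yF : y ^+ r.+1 = 'X^(r.+1) + 1 :> {poly R}.

Local Notation hpred := (\sum_(i < r) y ^+ i : {poly R}).
Local Notation hsucc := ('X * y ^+ r - 1 : {poly R}).

Lemma cofactor_pred : hpred * y = 'X^r - 1.
Proof.
have X_neq0 : 'X != 0 :> {poly R} by rewrite polyX_eq0.
apply: (mulfI X_neq0); rewrite mulrA mulX_sum_yexp mulrBl mul1r -exprSr yF.
by rewrite mulrBr mulr1 -exprS opprD addrACA subrr addr0.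
Qed.

Lemma yorder_pred : (1 < r)%N -> r%:R != 0 :> R -> forall Q, (0 < Q)%N ->
  hpred %| y ^+ Q - 1 -> (r %| Q)%N.
Proof.
move=> r_gt1 r_neq0 Q Q_gt0 hQ.
have hg := dvdp_expB1_gcdn (cofactor_coprimey cofactor_pred r_neq0) hQ (dvdp_sum_yexp r).
have g_gt0 : (0 < gcdn Q r)%N by rewrite gcdn_gt0 Q_gt0.
have r_le_g := cofactor_yorder_geq cofactor_pred r_gt1 g_gt0 hg.
have g_le_r := dvdn_leq (ltnW r_gt1) (dvdn_gcdr Q r).
have <- : gcdn Q r = r by apply/eqP; rewrite eqn_leq g_le_r r_le_g.
exact: dvdn_gcdl.
Qed.

Lemma cofactor_succ : hsucc * y = 'X^(r.+2) - 1.
Proof.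
by rewrite mulrBl mul1r -mulrA -exprSr yF mulrDr mulr1 -exprS opprD addrA addrK.
Qed.

Lemma yperiod_succ : (0 < r)%N -> r.+2%:R != 0 :> R -> hsucc %| y ^+ (r.+2 * r) - 1.
Proof.
move=> r_gt0 r2_neq0.
have hX := cofactor_coprimeX cofactor_succ (isT : (1 < r.+2)%N).
have hXr : hsucc %| 'X^(r.+2) - 1 by rewrite -cofactor_succ dvdp_mulr.
apply: (dvdp_mulB1_cancel (coprimep_expr _ hX) hXr).
by rewrite mulnC exprM -exprMn dvdp_expB1.
Qed.

Lemma Xorder_succ : (0 < r)%N -> r.+2%:R != 0 :> R -> forall Q, (0 < Q)%N ->
  hsucc %| y ^+ Q - 1 -> (r.+2 %| Q)%N.
Proof.
move=> r_gt0 r2_neq0 Q Q_gt0 hQ.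
have hy := cofactor_coprimey cofactor_succ r2_neq0.
apply: (cofactor_Xorder cofactor_succ) => //.
apply: (dvdp_mulB1_cancel (coprimep_expr (r * Q) hy)); first by rewrite mulnC exprM dvdp_expB1.
by rewrite mulrC exprM -exprMn dvdp_expB1.
Qed.

(* Modulo hsucc, X * y^(r+2) = y^2 and y^((r+2) r) = 1; so if y^(t(r+2)) = 1
   then X^i = y^(2i) for i = gcd(t, r), and comparing degrees forces i = r. *)
Lemma yorder_succ : (0 < r)%N -> r.+2%:R != 0 :> R -> forall Q, (0 < Q)%N ->
  hsucc %| y ^+ Q - 1 -> (r.+2 * r %| Q)%N.
Proof.
move=> r_gt0 r2_neq0 Q Q_gt0 hQ.
have /dvdnP [t Q_eq] := Xorder_succ r_gt0 r2_neq0 Q_gt0 hQ.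
have hz : coprimep hsucc (y ^+ r.+2) by rewrite coprimep_expr ?(cofactor_coprimey cofactor_succ).
have hzt : hsucc %| (y ^+ r.+2) ^+ t - 1 by rewrite -exprM mulnC -Q_eq.
have hzr : hsucc %| (y ^+ r.+2) ^+ r - 1 by rewrite -exprM yperiod_succ.
have := dvdp_expB1_gcdn hz hzt hzr; set i := gcdn t r => hzi.
have i_gt0 : (0 < i)%N by rewrite gcdn_gt0 r_gt0 orbT.
have hXz : hsucc %| 'X * y ^+ r.+2 - y ^+ 2.
  have -> : 'X * y ^+ r.+2 - y ^+ 2 = y ^+ 2 * hsucc :> {poly R}.
    by rewrite -[r.+2]add2n exprD; ring.
  exact/dvdp_mull/dvdpp.
have hXi : hsucc %| 'X^i - y ^+ (2 * i).
  have -> : 'X^i - y ^+ (2 * i) =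
      ('X * y ^+ r.+2) ^+ i - (y ^+ 2) ^+ i - 'X^i * ((y ^+ r.+2) ^+ i - 1) :> {poly R}.
    by rewrite exprMn -!exprM; ring.
  by rewrite dvdp_sub ?dvdp_subX ?dvdp_mull.
have i_eq : i = r.
  apply: dvdn_eq_of_lt_double r_gt0 (dvdn_gcdr t r) _.
  have := dvdp_leq _ hXi.
  rewrite -size_poly_eq0 addrC size_polyDl size_polyN size_yexp ?size_polyXn //.
  - by rewrite (size_cofactor cofactor_succ) // -mul2n => /(_ isT); rewrite ltnS.
  - by rewrite ltnS; lia.
by rewrite Q_eq mulnC dvdn_pmul2r // -i_eq dvdn_gcdl.
Qed.
End FrobeniusY.

Section Circulant.
Variables (p N : nat).
Hypothesis N_gt0 : (0 < N)%N.
Local Notation F := 'F_p.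
Implicit Types f g : {poly F}.

Definition fold_coef f (i : nat) : F := \sum_(j < size f) f`_j *+ (N %| j + i)%N.

Definition vec_of_poly f : vecZ (pdiv p) N := [ffun i : 'I_N => fold_coef f i].

Lemma fold_coef_wide f i n : (size f <= n)%N ->
  fold_coef f i = \sum_(j < n) f`_j *+ (N %| j + i)%N.
Proof.
move=> le_f_n; rewrite /fold_coef -!(big_mkord xpredT (fun j => f`_j *+ (N %| j + i)%N)).
rewrite (big_cat_nat (leq0n (size f)) le_f_n) /= [X in _ + X]big1_seq ?addr0 // => j.
by rewrite mem_index_iota => /andP[_ /andP[f_le_j _]]; rewrite nth_default // mul0rn.
Qed.

Lemma fold_coefD f g i : fold_coef (f + g) i = fold_coef f i + fold_coef g i.
Proof.
set n := maxn (size f) (size g).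
rewrite !(@fold_coef_wide _ _ n) ?leq_maxl ?leq_maxr ?(leq_trans (size_polyD _ _)) //.
by rewrite -big_split; apply: eq_bigr => j _; rewrite coefD mulrnDl.
Qed.

Lemma fold_coefN f i : fold_coef (- f) i = - fold_coef f i.
Proof. by rewrite /fold_coef size_polyN -sumrN; apply: eq_bigr => j _; rewrite coefN mulNrn. Qed.

Lemma fold_coefB f g i : fold_coef (f - g) i = fold_coef f i - fold_coef g i.
Proof. by rewrite fold_coefD fold_coefN. Qed.

Lemma fold_coefMX f i : fold_coef ('X * f) i = fold_coef f i.+1.
Proof.
rewrite (@fold_coef_wide _ _ (size f).+1); last first.
  by apply: leq_trans (size_polyMleq _ _) _; rewrite size_polyX.
rewrite big_ord_recl coefXM /= mul0rn add0r; apply: eq_bigr => j _.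
by rewrite coefXM /= addSnnS.
Qed.

Lemma fold_coefMXn n f i : fold_coef ('X^n * f) i = fold_coef f (i + n).
Proof.
elim: n i => [|n IHn] i; first by rewrite expr0 mul1r addn0.
by rewrite exprS -mulrA fold_coefMX IHn addSnnS.
Qed.

Lemma fold_coef_modn f i : fold_coef f (i %% N) = fold_coef f i.
Proof. by apply: eq_bigr => j _; rewrite /dvdn modnDmr. Qed.

Lemma fold_coef_mulXnB1 w i : fold_coef (('X^N - 1) * w) i = 0.
Proof.
by rewrite mulrBl mul1r fold_coefB fold_coefMXn -fold_coef_modn modnDr fold_coef_modn subrr.
Qed.

Lemma dvdp_of_fold_coef_eq0 f :
  (forall i, (i < N)%N -> fold_coef f i = 0) -> 'X^N - 1 %| f.
Proof.
move=> f0; apply/modp_eq0P/polyP => j; rewrite coef0.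
have size_mod : (size (f %% ('X^N - 1))%R <= N)%N.
  by rewrite -ltnS -(size_XnsubC1 (R := F) N_gt0) ltn_modp -size_poly_eq0 size_XnsubC1.
have [jN | Nj] := ltnP j N; last by rewrite nth_default // (leq_trans size_mod).
have := f0 _ (ltn_pmod (N - j)%N N_gt0).
rewrite {1}(divp_eq f ('X^N - 1)) fold_coefD mulrC fold_coef_mulXnB1 add0r.
rewrite (fold_coef_wide _ size_mod) (bigD1 (Ordinal jN)) //= big1 ?addr0.
  by rewrite dvdn_add_subn_mod // ?ltn_pmod // eqxx mulr1n.
move=> j' /negPf j'_neq; rewrite dvdn_add_subn_mod //.
by rewrite (_ : (j' == j :> nat) = false) // (inj_eq val_inj) j'_neq.
Qed.

Lemma Tmap_vec_of_poly f : Tmap (vec_of_poly f) = vec_of_poly (y * f).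
Proof.
apply/ffunP => i; rewrite !ffunE /= mulrDl mul1r fold_coefD fold_coefMX.
by rewrite fold_coef_modn addrC.
Qed.

Lemma iter_Tmap_vec_of_poly j f :
  iter j (@Tmap (pdiv p) N) (vec_of_poly f) = vec_of_poly (y ^+ j * f).
Proof.
elim: j => [|j IHj]; first by rewrite expr0 mul1r.
by rewrite iterS IHj Tmap_vec_of_poly exprS mulrA.
Qed.

Lemma vec_of_poly_eqP f g : vec_of_poly f = vec_of_poly g <-> 'X^N - 1 %| f - g.
Proof.
split=> [fg | /dvdpP [w fg]].
  apply: dvdp_of_fold_coef_eq0 => i iN; rewrite fold_coefB.
  have := congr1 (fun a : vecZ (pdiv p) N => a (Ordinal iN)) fg.
  by rewrite !ffunE => ->; rewrite subrr.
apply/ffunP => i; rewrite !ffunE; apply/eqP.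
by rewrite -subr_eq0 -fold_coefB fg mulrC fold_coef_mulXnB1.
Qed.

Lemma vec_of_poly_surj (a : vecZ (pdiv p) N) : exists f, vec_of_poly f = a.
Proof.
exists (\poly_(j < N) a (Ordinal (ltn_pmod (N - j)%N N_gt0))).
apply/ffunP => i; rewrite ffunE (fold_coef_wide _ (size_poly _ _)).
rewrite (bigD1 (Ordinal (ltn_pmod (N - i)%N N_gt0))) //= big1 ?addr0 => [|j].
  rewrite coef_poly ltn_pmod // dvdn_add_eq_subn_mod ?ltn_pmod // eqxx mulr1n.
  by congr (a _); apply: val_inj; rewrite /= subn_subn_modK.
rewrite dvdn_add_eq_subn_mod // => /negPf j_neq.
by rewrite (_ : (_ == _) = false) ?mulr0n // (inj_eq val_inj) j_neq.
Qed.

Lemma Pmax_is_of_order (L e : nat) (h : {poly F}) : (0 < L)%N ->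
  ('X^N - 1 : {poly F}) %| y ^+ (e + L) - y ^+ e -> h %| 'X^N - 1 -> coprimep h y ->
  (forall Q, (0 < Q)%N -> h %| y ^+ Q - 1 -> (L <= Q)%N) ->
  Pmax_is (pdiv p) N L.
Proof.
move=> L_gt0 yeL hN hy L_min.
have L_period (a : vecZ (pdiv p) N) : is_eventual_period a L.
  have [f <-] := vec_of_poly_surj a; exists e => j e_le_j.
  rewrite !iter_Tmap_vec_of_poly; apply/vec_of_poly_eqP.
  rewrite -mulrBl -(subnK e_le_j) -addnA !(exprD _ (j - e)) -mulrBr -mulrA.
  by rewrite dvdp_mull // dvdp_mulr.
split=> [|a Q [Q_gt0 [_ Q_min]]]; last first.
  by rewrite leqNgt; apply/negP => Q_lt_L; apply: (Q_min L); rewrite ?L_gt0.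
exists (vec_of_poly 1); split=> //; split=> // Q /andP[Q_gt0 Q_lt_L] [M QM].
have := QM M (leqnn M); rewrite !iter_Tmap_vec_of_poly => /vec_of_poly_eqP.
rewrite !mulr1 exprD -{2}(mulr1 (y ^+ M)) -mulrBr => /(dvdp_trans hN).
rewrite Gauss_dvdpr ?coprimep_expr // => /(L_min _ Q_gt0).
by rewrite leqNgt Q_lt_L.
Qed.
End Circulant.

Lemma Pmax_is_ppow p k m d (h : {poly 'F_p}) : prime p ->
  h * y = 'X^m - 1 -> (1 < m)%N -> ~~ (p %| m)%N -> ~~ (p %| d)%N -> (0 < d)%N ->
  h %| y ^+ d - 1 -> (forall Q, (0 < Q)%N -> h %| y ^+ Q - 1 -> (d %| Q)%N) ->
  Pmax_is p (p ^ k * m) (p ^ k * d).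
Proof.
move=> p_pr hyE m_gt1 p'm p'd d_gt0 hd d_min; have charF := pchar_Fp p_pr.
have m_neq0 : m%:R != 0 :> 'F_p by rewrite -(dvdn_pcharf charF).
have pk_gt0 : (0 < p ^ k)%N by rewrite expn_gt0 prime_gt0.
have hyN : h ^+ (p ^ k) * y ^+ (p ^ k) = 'X^(p ^ k * m) - 1.
  by rewrite -exprMn hyE exprB1_pchar // -exprM mulnC.
have hN : h ^+ (p ^ k) %| 'X^(p ^ k * m) - 1 by rewrite -hyN dvdp_mulr.
have yN : ('X^(p ^ k * m) - 1 : {poly 'F_p}) %| y ^+ (p ^ k + p ^ k * d) - y ^+ (p ^ k).
  rewrite -hyN exprD -[X in _ - X]mulr1 -mulrBr mulrC dvdp_mul2l; last first.
    by rewrite -size_poly_eq0 size_yexp.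
  by rewrite mulnC exprM -exprB1_pchar // dvdp_exp2r.
(* 'F_p is 'Z_(pdiv p). *)
rewrite -{1}(pdiv_id p_pr); apply: Pmax_is_of_order yN hN _ _.
- by rewrite muln_gt0 pk_gt0 ltnW.
- by rewrite muln_gt0 pk_gt0.
- exact/coprimep_expl/(cofactor_coprimey hyE).
move=> Q Q_gt0 hQ; apply: (dvdn_leq Q_gt0).
have h_n1 : size h != 1%N by rewrite (size_cofactor hyE) // neq_ltn m_gt1 orbT.
rewrite Gauss_dvd ?coprimeXl ?prime_coprime // (pexp_dvdn_of_dvdp_expB1 charF h_n1) //.
by apply: d_min Q_gt0 (dvdp_trans (dvdp_exp pk_gt0 (dvdpp h)) hQ).
Qed.

Local Close Scope ring_scope.

Theorem proposition7p4 (p k n : nat) :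
  prime p -> (1 <= n)%N -> (p = 2 -> (1 < n)%N) ->
  Pmax_is p (p ^ k * (p ^ n - 1)) (p ^ k * (p ^ n - 1)) /\
  Pmax_is p (p ^ k * (p ^ n + 1)) (p ^ k * (p ^ (2 * n) - 1)).
Proof.
move=> p_pr n_gt0 p2_n_gt1; have charF := pchar_Fp p_pr.
have [r pn_eq] : exists r, p ^ n = r.+1 by exists (p ^ n).-1; rewrite prednK ?expn_gt0 ?prime_gt0.
have r_gt1 : 1 < r by rewrite -ltnS -pn_eq ppow_gt2.
have r_gt0 := ltnW r_gt1.
have yF : (y ^+ r.+1 = 'X^(r.+1) + 1 :> {poly 'F_p})%R by rewrite -pn_eq exprXD1_pchar.
have [p'r p'r2] : ~~ (p %| r) /\ ~~ (p %| r.+2).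
  by apply: ndvdn_pred_succ (prime_gt1 p_pr) _; rewrite -pn_eq dvdn_exp.
have [r_neq0 r2_neq0] : (r%:R != 0 :> 'F_p)%R /\ (r.+2%:R != 0 :> 'F_p)%R.
  by rewrite -!(dvdn_pcharf charF).
rewrite pn_eq subn1 succnK addn1 (_ : p ^ (2 * n) - 1 = r.+2 * r); last first.
  by rewrite mulnC expnM pn_eq; nia.
split.
  apply: (Pmax_is_ppow _ p_pr (cofactor_pred yF) r_gt1 p'r p'r r_gt0 (dvdp_sum_yexp r)).
  exact: yorder_pred yF r_gt1 r_neq0.
apply: (Pmax_is_ppow _ p_pr (cofactor_succ yF) _ p'r2 _ _ (yperiod_succ yF r_gt0 r2_neq0)) => //.
- by rewrite Euclid_dvdM // negb_or p'r2 p'r.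
- by rewrite muln_gt0 r_gt0.
- exact: yorder_succ yF r_gt0 r2_neq0.
Qed.
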